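(* For any $\zeta\ge1$ there exists an $O(\zeta)$-round deterministic $\mathsf{CONGEST}$ algorithm that lets each vertex $u$ of $G$ compute $f_u^\ast(d)$ for all $d\in[\zeta]=\{1,\dots,\zeta\}$.
   Context: $G=(V,E)$ is an unweighted directed graph with $n=|V|$, also the communication network (communication over edges in both directions). $\mathsf{CONGEST}$: synchronous rounds, each vertex may send an $O(\log n)$-bit message to each neighbour per round, unique identifiers, unlimited local computation. $P=(s=v_0,v_1,\dots,v_{h_{st}}=t)$ is a given shortest $s$-$t$ path; the endpoints of each edge of $P$ know it belongs to $P$ and each $v_i$ knows its index $i$. For a vertex $u$ and integer $d\ge 0$, $f_u^\ast(d)$ is the largest index $j$ such that there exists a path from $u$ to $v_j$ of length exactly $d$ avoiding all edges of $P$; if no such $j$ exists, $f_u^\ast(d)=-\infty$. *)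

From mathcomp Require Import all_boot.
Set Implicit Arguments.
Unset Strict Implicit.
Unset Printing Implicit Defensive.

Record LocalInput := {
  li_n : nat;
  li_id : nat;
  li_out : nat -> bool;   (* ids of out-neighbours *)
  li_in : nat -> bool;    (* ids of in-neighbours *)
  li_Pout : nat -> bool;  (* ids w such that (v,w) is an edge of P *)
  li_Pin : nat -> bool;   (* ids w such that (w,v) is an edge of P *)
  li_idx : option nat     (* Some i iff v = v_i *)
}.

Definition Msg := seq bool.
Definition History := seq (nat -> Msg).     (* round r: sender id |-> message
                                               ([::] = no message) *)

(* A deterministic algorithm (unlimited local computation):
   alg_send r inp h k = message sent in round r to the neighbour with id k,
   given the local input and the history of received messages;
   alg_out inp h d = the vertex's output for f_u^*(d) (None = -infinity). *)
Record Algorithm := {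
  alg_send : nat -> LocalInput -> History -> nat -> Msg;
  alg_out : LocalInput -> History -> nat -> option nat
}.

Section Model.
Variables (n : nat) (E : rel 'I_n) (id : 'I_n -> nat) (s : 'I_n) (ps : seq 'I_n).

(* P = (s = v_0, ..., v_h = t) with h = size ps *)
Definition pv (i : nat) : 'I_n := nth s (s :: ps) i.

Definition onP (x y : 'I_n) : bool :=
  has (fun i => (pv i == x) && (pv i.+1 == y)) (iota 0 (size ps)).

(* communication over edges in both directions *)
Definition adj (v w : 'I_n) : bool := E v w || E w v.

Definition is_shortest_path : Prop :=
  path E s ps /\
  forall q : seq 'I_n, path E s q -> last s q = last s ps -> size ps <= size q.

Definition local_input (v : 'I_n) : LocalInput := {|
  li_n := n;
  li_id := id v;
  li_out := fun k => [exists w, (id w == k) && E v w];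
  li_in := fun k => [exists w, (id w == k) && E w v];
  li_Pout := fun k => [exists w, [&& id w == k, E v w & onP v w]];
  li_Pin := fun k => [exists w, [&& id w == k, E w v & onP w v]];
  li_idx := if v \in s :: ps then Some (index v (s :: ps)) else None
|}.

(* Synchronous execution: hist A r v = messages received by v in rounds
   0, ..., r-1. *)
Fixpoint hist (A : Algorithm) (r : nat) : 'I_n -> History :=
  match r with
  | 0 => fun _ => [::]
  | r'.+1 =>
      let h := hist A r' in
      fun v => rcons (h v) (fun k =>
        match [pick w | (id w == k) && adj v w] with
        | Some w => alg_send A r' (local_input w) (h w) (id v)
        | None => [::]
        end)
  end.

Definition reachP (u : 'I_n) (d j : nat) : Prop :=
  exists q : seq 'I_n,
    [/\ path (fun x y => E x y && ~~ onP x y) u q, size q = d & last u q = pv j].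

(* o is f_u^*(d): None encodes -infinity *)
Definition is_fstar (u : 'I_n) (d : nat) (o : option nat) : Prop :=
  match o with
  | None => forall j, j <= size ps -> ~ reachP u d j
  | Some j => [/\ j <= size ps, reachP u d j &
                 forall j', j' <= size ps -> reachP u d j' -> j' <= j]
  end.

End Model.

(* number of bits of n, i.e. Theta(log n) *)
Definition lg (n : nat) : nat := (trunc_log 2 n).+1.

From mathcomp Require Import all_boot.

Set Implicit Arguments.
Unset Strict Implicit.
Unset Printing Implicit Defensive.

(* f_u^*(0) is the index of u on P (or -oo), and f_u^*(d+1) is the maximum of
   f_w^*(d) over the edges (u, w) not on P.  So in round r every vertex sends
   its value f^*(r) to all neighbours and computes f^*(r+1) from the values
   received from its out-neighbours; after zeta rounds it knows f^*(d) for all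
   d <= zeta.  A shortest path is simple, so every index is below n and each
   message fits in lg n bits. *)

Fixpoint bits (m j : nat) : Msg :=
  if m is m'.+1 then odd j :: bits m' j./2 else [::].

Fixpoint of_bits (l : seq bool) : nat :=
  if l is b :: l' then b + (of_bits l').*2 else 0.

Lemma size_bits m j : size (bits m j) = m.
Proof. by elim: m j => //= m IH j; rewrite IH. Qed.

Lemma of_bitsK m j : j < 2 ^ m -> of_bits (bits m j) = j.
Proof.
elim: m j => [|m IH] j /=; first by rewrite expn0; case: j.
by rewrite expnS mul2n -ltn_half_double => /IH ->; rewrite odd_double_half.
Qed.

Lemma ltn_exp2_lg n : n < 2 ^ lg n.
Proof. exact: trunc_log_ltn. Qed.

(* The value f^*(d) = j is coded by j.+1 and f^*(d) = -oo by 0, so that the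
   maximum of values is [maxn] with neutral element 0. *)
Definition lower (x : nat) : option nat := if x is j.+1 then Some j else None.

Section Walks.
Variables (n : nat) (E : rel 'I_n) (s : 'I_n) (ps : seq 'I_n).

Definition fstar_code (u : 'I_n) (d x : nat) : Prop :=
  (forall j, j <= size ps -> reachP E s ps u d j -> j < x) /\
  (0 < x -> x.-1 <= size ps /\ reachP E s ps u d x.-1).

Lemma is_fstar_lower u d x : fstar_code u d x -> is_fstar E s ps u d (lower x).
Proof.
case: x => [|x] [bound attained] /=; first by move=> j hj /(bound j hj).
by have [x_le reach] := attained isT; split=> // j hj /(bound j hj).
Qed.

Lemma fstar_code_le u d x : fstar_code u d x -> x <= (size ps).+1.
Proof. by case: x => // x [_ /(_ isT) []]. Qed.

Lemma reachP_succ u d j :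
  reachP E s ps u d.+1 j <->
  exists w, [/\ E u w, ~~ onP s ps u w & reachP E s ps w d j].
Proof.
split=> [[[|w q] [] //= /andP[/andP[euw nop] walk] [size_q] last_q] |].
  by exists w; split=> //; exists q.
by move=> [w [euw nop [q [walk <- last_q]]]]; exists (w :: q); rewrite /= euw nop.
Qed.

Lemma fstar_code0 u : uniq (s :: ps) ->
  fstar_code u 0 (if u \in s :: ps then (index u (s :: ps)).+1 else 0).
Proof.
move=> P_uniq; split=> [j hj [q [_ /size0nil -> u_eq]] | ].
  have -> : u = pv s ps j := u_eq.
  by rewrite /pv mem_nth // index_uniq.
case: ifP => // u_in _; split; first by have := index_mem u (s :: ps); rewrite u_in.
by exists [::]; rewrite /pv nth_index.
Qed.

Lemma fstar_code_succ u d (r : seq nat) (P : pred nat) (F : nat -> nat) :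
  (forall k, k \in r -> P k ->
     exists w, [/\ E u w, ~~ onP s ps u w & fstar_code w d (F k)]) ->
  (forall w, E u w -> ~~ onP s ps u w ->
     exists2 k, k \in r & P k /\ fstar_code w d (F k)) ->
  fstar_code u d.+1 (\max_(k <- r | P k) F k).
Proof.
move=> sound complete; split=> [j hj /reachP_succ [w [euw nop reach]] | ].
  have [k k_in [Pk [bound _]]] := complete w euw nop.
  exact: leq_trans (bound j hj reach) (leq_bigmax_seq _ k_in Pk).
rewrite big_seq_cond.
apply: (big_ind (fun x => 0 < x -> x.-1 <= size ps /\ reachP E s ps u d.+1 x.-1)).
- by [].
- by move=> x y hx hy; rewrite /maxn; case: ifP.
move=> k /andP[k_in Pk] pos; have [w [euw nop [_ attained]]] := sound k k_in Pk.
have [le_ps reach] := attained pos.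
by split=> //; apply/reachP_succ; exists w.
Qed.

Lemma shortest_path_uniq : is_shortest_path E s ps -> uniq (s :: ps).
Proof.
case=> walk /(_ (shorten s ps)); case: (shortenP walk) => q walk_q q_uniq q_sub.
move=> /(_ walk_q erefl) minimal.
apply: (leq_size_uniq (s2 := s :: ps) q_uniq) minimal.
by move=> x; rewrite !inE => /predU1P[-> | /q_sub ->]; rewrite ?eqxx ?orbT.
Qed.

Lemma size_path_lt : uniq (s :: ps) -> size ps < n.
Proof. by move=> /card_uniqP card_P; have := max_card (mem (s :: ps)); rewrite card_P card_ord. Qed.

End Walks.

Definition fvalue (kappa : nat) (inp : LocalInput) (h : History) (d : nat) : nat :=
  if d is d'.+1 then
    \max_(k <- iota 0 (li_n inp ^ kappa) | li_out inp k && ~~ li_Pout inp k)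
      of_bits (nth (fun _ => [::]) h d' k)
  else if li_idx inp is Some i then i.+1 else 0.

Definition fstar_alg (kappa : nat) : Algorithm := {|
  alg_send := fun r inp h _ => bits (lg (li_n inp)) (fvalue kappa inp h r);
  alg_out := fun inp h d => lower (fvalue kappa inp h d)
|}.

Section Execution.
Variables (kappa n : nat) (E : rel 'I_n) (id : 'I_n -> nat) (s : 'I_n).
Variable ps : seq 'I_n.
Hypothesis id_inj : injective id.

Lemma size_hist A r u : size (hist E id s ps A r u) = r.
Proof. by elim: r u => //= r IH u; rewrite size_rcons IH. Qed.

Lemma hist_received A r d u w : d < r -> adj E u w ->
  nth (fun _ => [::]) (hist E id s ps A r u) d (id w) =
  alg_send A d (local_input E id s ps w) (hist E id s ps A d w) (id u).
Proof.
move=> + adj_uw; elim: r => // r IH; rewrite ltnS leq_eqVlt.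
case/predU1P=> [-> | lt_dr] /=; rewrite nth_rcons size_hist; last by rewrite lt_dr IH.
rewrite ltnn eqxx; case: pickP => [w' /andP[/eqP /id_inj -> _] // | none].
by have := none w; rewrite eqxx adj_uw.
Qed.

Lemma proper_out_id u k :
  li_out (local_input E id s ps u) k && ~~ li_Pout (local_input E id s ps u) k =
  [exists w, [&& id w == k, E u w & ~~ onP s ps u w]].
Proof.
apply/idP/existsP => [/andP[/existsP[w /andP[/eqP id_w euw]] not_Pout] | ].
  exists w; rewrite id_w eqxx euw /=; apply: contra not_Pout => onP_uw.
  by apply/existsP; exists w; rewrite id_w eqxx euw.
case=> w /and3P[/eqP <- euw nop] /=; apply/andP; split.
  by apply/existsP; exists w; rewrite eqxx.
by apply/existsP => -[w' /and3P[/eqP /id_inj -> _ onP_uw]]; rewrite onP_uw in nop.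
Qed.

Hypothesis id_lt : forall v, id v < n ^ kappa.
Hypothesis P_uniq : uniq (s :: ps).

Lemma fvalue_code d r u : d <= r ->
  fstar_code E s ps u d
    (fvalue kappa (local_input E id s ps u) (hist E id s ps (fstar_alg kappa) r u) d).
Proof.
elim: d r u => [|d IH] r u le_dr.
  by have /= := fstar_code0 E u P_uniq; case: (u \in s :: ps).
have received w : E u w -> fstar_code E s ps w d
    (of_bits (nth (fun _ => [::]) (hist E id s ps (fstar_alg kappa) r u) d (id w))).
  move=> euw; rewrite hist_received ?/adj ?euw // of_bitsK; first exact: IH.
  apply: leq_ltn_trans (ltn_exp2_lg n); apply: leq_trans (size_path_lt P_uniq).
  exact: fstar_code_le (IH d w (leqnn d)).
apply: fstar_code_succ => [k _ | w euw nop].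
  rewrite proper_out_id => /existsP[w /and3P[/eqP <- euw nop]].
  by exists w; split; last exact: received.
exists (id w); first by rewrite mem_iota id_lt.
split; last exact: received.
by rewrite proper_out_id; apply/existsP; exists w; rewrite eqxx euw.
Qed.

End Execution.

Theorem lemma4p2 :
  forall kappa : nat, exists c b : nat, forall zeta : nat, 1 <= zeta ->
  exists A : Algorithm,
  forall (n : nat) (E : rel 'I_n) (id : 'I_n -> nat) (s : 'I_n) (ps : seq 'I_n),
    irreflexive E -> injective id -> (forall v, id v < n ^ kappa) ->
    is_shortest_path E s ps ->
    (forall (r : nat) (v w : 'I_n), r < c * zeta -> adj E v w ->
       size (alg_send A r (local_input E id s ps v) (hist E id s ps A r v) (id w))
         <= b * lg n) /\
    (forall (u : 'I_n) (d : nat), 1 <= d <= zeta ->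
       is_fstar E s ps u d
         (alg_out A (local_input E id s ps u) (hist E id s ps A (c * zeta) u) d)).
Proof.
move=> kappa; exists 1, 1 => zeta _; exists (fstar_alg kappa).
move=> n E id s ps _ id_inj id_lt /shortest_path_uniq P_uniq; split.
  by move=> r v w _ _; rewrite /= size_bits mul1n.
move=> u d /andP[_ le_d]; apply: is_fstar_lower.
by apply: fvalue_code; rewrite // mul1n.
Qed.
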